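(* Let $x_0\in(-2,2)$, $0<\alpha<1$ and let $K\subset\{\eta\in\mathbb{C}:\operatorname{Im}\eta>0\}$ be compact. For $N,n\in\mathbb{N}$, $c_1,\dots,c_N\in\mathbb{R}$ and $\eta_1,\dots,\eta_N\in K$ put $\lambda_j=x_0+\eta_j/n^\alpha$ and $\phi^{(n)}=\frac{1}{n^\alpha}\sum_{j=1}^Nc_ja_{\lambda_j}=\sum_{k\in\mathbb{Z}}\phi^{(n)}_kz^k$. Then there exist $d_1,d_2>0$ (depending only on $x_0,\alpha,K$) such that $$|\phi^{(n)}_k|\le\frac{d_1}{n^\alpha}\left(\sum_{j=1}^N|c_j|\right)e^{-d_2|k|/n^\alpha}$$ for all $k\in\mathbb{Z}$, $n,N\in\mathbb{N}$, $\eta_j\in K$, $c_j\in\mathbb{R}$.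
   Context: For $\lambda\in\mathbb{C}\setminus[-2,2]$, $\omega(\lambda)=\frac{\lambda-\sqrt{\lambda^2-4}}{2}$, with the branch making $\omega$ analytic on $\mathbb{C}\setminus[-2,2]$ and $\omega(\lambda)=O(1/\lambda)$ as $\lambda\to\infty$ (so $|\omega(\lambda)|<1$). For $\operatorname{Im}\lambda>0$, $a_\lambda$ is the Laurent series $a_\lambda(z)=\sum_{j\in\mathbb{Z}}\operatorname{Im}\left(\frac{\omega(\lambda)^{|j|}}{\omega(\lambda)-\omega(\lambda)^{-1}}\right)z^j$. *)

From Stdlib Require Import Reals ZArith Lra.
Open Scope R_scope.

Definition Cx := (R * R)%type.
Definition re (z : Cx) : R := fst z.
Definition im (z : Cx) : R := snd z.
Definition Cadd (z w : Cx) : Cx := (re z + re w, im z + im w).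
Definition Csub (z w : Cx) : Cx := (re z - re w, im z - im w).
Definition Cmul (z w : Cx) : Cx :=
  (re z * re w - im z * im w, re z * im w + im z * re w).
Definition Cinv (z : Cx) : Cx :=
  let d := re z * re z + im z * im z in (re z / d, - im z / d).
Definition Cdiv (z w : Cx) : Cx := Cmul z (Cinv w).
Definition Cscal (r : R) (z : Cx) : Cx := (r * re z, r * im z).
Fixpoint Cpow (z : Cx) (n : nat) : Cx :=
  match n with O => (1, 0) | S m => Cmul z (Cpow z m) end.
Definition Cnorm (z : Cx) : R := sqrt (re z * re z + im z * im z).

(* principal square root (any square root works below, since the branch
   of omega is fixed afterwards by the condition |omega| < 1) *)
Definition Csqrt (z : Cx) : Cx :=
  let r := Cnorm z in
  (sqrt ((r + re z) / 2),
   if Rlt_dec (im z) 0 then - sqrt ((r - re z) / 2) else sqrt ((r - re z) / 2)).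

Definition omega (l : Cx) : Cx :=
  let s := Csqrt (Csub (Cmul l l) (4, 0)) in
  let w1 := Cscal (/2) (Csub l s) in
  let w2 := Cscal (/2) (Cadd l s) in
  if Rlt_dec (Cnorm w1) 1 then w1 else w2.

(* j-th Laurent coefficient of a_lambda *)
Definition a_coef (l : Cx) (j : Z) : R :=
  let w := omega l in
  im (Cdiv (Cpow w (Z.abs_nat j)) (Csub w (Cinv w))).

(* finite sum  sum_{j=0}^{N-1} f j  (indices shifted from 1..N) *)
Fixpoint sumN (N : nat) (f : nat -> R) : R :=
  match N with O => 0 | S M => sumN M f + f M end.

Definition lam (x0 alpha : R) (n : nat) (eta : Cx) : Cx :=
  Cadd (x0, 0) (Cscal (/ Rpower (INR n) alpha) eta).

Definition phi_coef (x0 alpha : R) (n N : nat) (c : nat -> R) (eta : nat -> Cx)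
  (k : Z) : R :=
  / Rpower (INR n) alpha * sumN N (fun j => c j * a_coef (lam x0 alpha n (eta j)) k).

(* compactness in C = R^2: closed and bounded (Heine-Borel) *)
Definition Cclosed (K : Cx -> Prop) : Prop :=
  forall z, ~ K z -> exists eps, 0 < eps /\
    forall w, Cnorm (Csub w z) < eps -> ~ K w.
Definition Cbounded (K : Cx -> Prop) : Prop :=
  exists M, forall z, K z -> Cnorm z <= M.
Definition Ccompact (K : Cx -> Prop) : Prop := Cclosed K /\ Cbounded K.

(* The k-th coefficient of a_lambda is Im(omega^|k| / (omega - omega^-1)), where
   omega is the root of omega^2 - lambda omega + 1 = 0 in the unit disc and
   |omega - omega^-1|^2 = |lambda - 2| |lambda + 2|.  For lambda = x0 + u eta with
   u = n^-alpha <= 1, comparing imaginary parts in lambda = omega + omega^-1 gives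
   |omega| (2 + u Im eta) <= 2, hence |omega| <= exp (- u m / (2 + m)) where
   m = min_K Im eta > 0; and |lambda -+ 2| >= (2 -+ x0) Im eta / |eta| bounds
   |omega - omega^-1| from below uniformly on K. *)

From Stdlib Require Import Reals ZArith Lra Lia Psatz ClassicalEpsilon.
From Coquelicot Require Compactness.
Open Scope R_scope.

Definition Cnorm2 (z : Cx) : R := re z * re z + im z * im z.

Lemma Cnorm_sqrt_Cnorm2 (z : Cx) : Cnorm z = sqrt (Cnorm2 z).
Proof. reflexivity. Qed.

Lemma Cnorm2_ge0 (z : Cx) : 0 <= Cnorm2 z.
Proof. unfold Cnorm2; nra. Qed.

Lemma Cnorm_ge0 (z : Cx) : 0 <= Cnorm z.
Proof. apply sqrt_pos. Qed.

Lemma Cnorm2_mul (z w : Cx) : Cnorm2 (Cmul z w) = Cnorm2 z * Cnorm2 w.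
Proof. destruct z, w; unfold Cnorm2, Cmul, re, im; simpl; ring. Qed.

Lemma Cnorm2_inv (z : Cx) : Cnorm2 z <> 0 -> Cnorm2 (Cinv z) = / Cnorm2 z.
Proof.
destruct z as [a b]; unfold Cnorm2, Cinv, re, im; simpl; intros Hz.
replace (a / (a * a + b * b) * (a / (a * a + b * b))
  + - b / (a * a + b * b) * (- b / (a * a + b * b)))
  with ((a * a + b * b) / ((a * a + b * b) * (a * a + b * b))) by (field; exact Hz).
field; exact Hz.
Qed.

Lemma Cnorm_mul (z w : Cx) : Cnorm (Cmul z w) = Cnorm z * Cnorm w.
Proof.
rewrite !Cnorm_sqrt_Cnorm2, Cnorm2_mul.
apply sqrt_mult; apply Cnorm2_ge0.
Qed.

Lemma Cnorm_inv (z : Cx) : Cnorm2 z <> 0 -> Cnorm (Cinv z) = / Cnorm z.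
Proof.
intros Hz; rewrite !Cnorm_sqrt_Cnorm2, Cnorm2_inv by exact Hz.
apply sqrt_inv.
Qed.

Lemma Cnorm_pow (z : Cx) (k : nat) : Cnorm (Cpow z k) = Cnorm z ^ k.
Proof.
induction k as [|k IHk]; simpl.
- rewrite Cnorm_sqrt_Cnorm2; unfold Cnorm2, re, im; simpl.
  replace (1 * 1 + 0 * 0) with 1 by ring; apply sqrt_1.
- rewrite Cnorm_mul, IHk; reflexivity.
Qed.

Lemma Cnorm2_le_sqr (z : Cx) (M : R) : Cnorm z <= M -> Cnorm2 z <= M * M.
Proof.
intros HM; pose proof (Cnorm_ge0 z).
rewrite <- (sqrt_sqrt (Cnorm2 z)) by apply Cnorm2_ge0.
apply Rmult_le_compat; assumption.
Qed.

Lemma Rabs_re_le_Cnorm (z : Cx) : Rabs (re z) <= Cnorm z.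
Proof.
rewrite <- sqrt_Rsqr_abs; apply sqrt_le_1_alt.
unfold Cnorm2, Rsqr; nra.
Qed.

Lemma Rabs_im_le_Cnorm (z : Cx) : Rabs (im z) <= Cnorm z.
Proof.
rewrite <- sqrt_Rsqr_abs; apply sqrt_le_1_alt.
unfold Cnorm2, Rsqr; nra.
Qed.

Lemma Csqrt_sqr (z : Cx) : Cmul (Csqrt z) (Csqrt z) = z.
Proof.
destruct z as [a b]; unfold Csqrt, Cnorm, Cmul, re, im; simpl.
set (r := sqrt (a * a + b * b)).
assert (Hr : 0 <= r) by apply sqrt_pos.
assert (Hr2 : r * r = a * a + b * b) by (apply sqrt_sqrt; nra).
assert (Hp : 0 <= (r + a) / 2) by nra.
assert (Hm : 0 <= (r - a) / 2) by nra.
pose proof (sqrt_sqrt _ Hp) as Ep; pose proof (sqrt_sqrt _ Hm) as Em.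
assert (Hpm : sqrt ((r + a) / 2) * sqrt ((r - a) / 2) = Rabs b / 2).
{ rewrite <- sqrt_mult by assumption.
  rewrite <- (sqrt_square (Rabs b / 2)) by (pose proof (Rabs_pos b); lra).
  f_equal. replace (Rabs b / 2 * (Rabs b / 2)) with (Rabs (b * b) / 4)
    by (rewrite Rabs_mult; field).
  rewrite Rabs_right by nra. nra. }
destruct (Rlt_dec b 0) as [Hb|Hb].
- rewrite Rabs_left in Hpm by exact Hb. f_equal; nra.
- rewrite Rabs_right in Hpm by lra. f_equal; nra.
Qed.

(* Both candidates in the definition of [omega] are roots of [w^2 - l w + 1]. *)
Lemma omega_quadratic (l : Cx) :
  Cmul (omega l) (omega l) = Csub (Cmul l (omega l)) (1, 0).
Proof.
unfold omega.
pose proof (Csqrt_sqr (Csub (Cmul l l) (4, 0))) as Hs.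
destruct (Csqrt (Csub (Cmul l l) (4, 0))) as [s1 s2], l as [l1 l2].
unfold Cmul, Csub, re, im in Hs; simpl in Hs; injection Hs as Hs1 Hs2.
destruct (Rlt_dec _ 1);
  unfold Cscal, Csub, Cadd, Cmul, re, im; simpl; f_equal; nra.
Qed.

(* If [w1 w2 = 1] and [|w1| = 1] then [w2] is the conjugate of [w1], so [w1 + w2] would be real. *)
Lemma Cnorm2_lt1_of_reciprocal (w1 w2 : Cx) :
  Cmul w1 w2 = (1, 0) -> 0 < im (Cadd w1 w2) -> 1 <= Cnorm2 w1 -> Cnorm2 w2 < 1.
Proof.
destruct w1 as [a b], w2 as [c d]; unfold Cmul, Cadd, Cnorm2, re, im; simpl.
intros H Hi Hw1; injection H as M1 M2.
assert (Hne : a * a + b * b <> 1).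
{ intro E. assert (d = - b) by
    (replace d with (a * (a * d + b * c) - b * (a * c - b * d) + (1 - (a * a + b * b)) * d)
       by ring; rewrite M1, M2, E; ring).
  lra. }
assert (P : (a * a + b * b) * (c * c + d * d) = 1).
{ replace ((a * a + b * b) * (c * c + d * d))
    with ((a * c - b * d) * (a * c - b * d) + (a * d + b * c) * (a * d + b * c)) by ring.
  rewrite M1, M2; ring. }
nra.
Qed.

Lemma omega_Cnorm2_lt1 (l : Cx) : 0 < im l -> Cnorm2 (omega l) < 1.
Proof.
intros Hl; unfold omega.
pose proof (Csqrt_sqr (Csub (Cmul l l) (4, 0))) as Hs.
set (s := Csqrt (Csub (Cmul l l) (4, 0))) in *.
set (w1 := Cscal (/ 2) (Csub l s)); set (w2 := Cscal (/ 2) (Cadd l s)).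
destruct (Rlt_dec (Cnorm w1) 1) as [Hw1|Hw1].
- rewrite Cnorm_sqrt_Cnorm2 in Hw1.
  destruct (Rle_lt_dec 1 (Cnorm2 w1)) as [H1|H1]; [|exact H1].
  apply sqrt_le_1_alt in H1; rewrite sqrt_1 in H1; lra.
- apply (Cnorm2_lt1_of_reciprocal w1).
  + destruct l as [l1 l2], s as [s1 s2]; subst w1 w2.
    unfold Cmul, Csub, Cadd, Cscal, re, im in *; simpl in *.
    injection Hs as Hs1 Hs2; f_equal; nra.
  + subst w1 w2; destruct l, s; unfold Cadd, Csub, Cscal, re, im in *; simpl in *; lra.
  + rewrite Cnorm_sqrt_Cnorm2 in Hw1.
    destruct (Rle_lt_dec 1 (Cnorm2 w1)) as [H1|H1]; [exact H1|].
    exfalso; apply Hw1; rewrite <- sqrt_1; apply sqrt_lt_1_alt; split; [apply Cnorm2_ge0|exact H1].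
Qed.

Section OmegaRoot.

Variables l w : Cx.
Hypothesis Hroot : Cmul w w = Csub (Cmul l w) (1, 0).

Local Lemma root_re : re w * re w - im w * im w = re l * re w - im l * im w - 1.
Proof. destruct l, w; unfold Cmul, Csub, re, im in *; simpl in *; now injection Hroot. Qed.

Local Lemma root_im : 2 * re w * im w = re l * im w + im l * re w.
Proof.
destruct l, w; unfold Cmul, Csub, re, im in *; simpl in *.
injection Hroot as _ E; lra.
Qed.

Lemma root_Cnorm2_pos : 0 < Cnorm2 w.
Proof.
pose proof root_re; pose proof root_im.
destruct (Req_dec (Cnorm2 w) 0) as [E|E]; unfold Cnorm2 in *; [|nra].
assert (re w = 0) by nra; assert (im w = 0) by nra. nra.
Qed.

Lemma root_Cinv : Cinv w = Csub l w.
Proof.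
pose proof root_re as Ere; pose proof root_im as Eim; pose proof root_Cnorm2_pos as Hw.
destruct l as [l1 l2], w as [a b]; unfold Cinv, Csub, Cnorm2, re, im in *; simpl in *.
assert (F1 : l1 * (a * a + b * b) = a * (a * a + b * b + 1)).
{ replace (l1 * (a * a + b * b)) with (a * (l1 * a - l2 * b) + b * (l1 * b + l2 * a)) by ring.
  rewrite <- Eim; replace (l1 * a - l2 * b) with (a * a - b * b + 1) by lra; ring. }
assert (F2 : l2 * (a * a + b * b) = b * (a * a + b * b - 1)).
{ replace (l2 * (a * a + b * b)) with (a * (l1 * b + l2 * a) - b * (l1 * a - l2 * b)) by ring.
  rewrite <- Eim; replace (l1 * a - l2 * b) with (a * a - b * b + 1) by lra; ring. }
f_equal; field_simplify_eq; nra.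
Qed.

Lemma root_Cnorm2_sub_inv :
  Cnorm2 (Csub w (Cinv w)) * Cnorm2 (Csub w (Cinv w)) =
  Cnorm2 (Csub l (2, 0)) * Cnorm2 (Cadd l (2, 0)).
Proof.
rewrite root_Cinv.
pose proof root_re; pose proof root_im.
destruct l as [l1 l2], w as [a b]; unfold Csub, Cadd, Cnorm2, re, im in *; simpl in *.
assert (V1 : (a - (l1 - a)) * (a - (l1 - a)) - (b - (l2 - b)) * (b - (l2 - b))
             = l1 * l1 - l2 * l2 - 4) by nra.
assert (V2 : (a - (l1 - a)) * (b - (l2 - b)) = l1 * l2) by nra.
set (v1 := a - (l1 - a)) in *; set (v2 := b - (l2 - b)) in *.
replace ((v1 * v1 + v2 * v2) * (v1 * v1 + v2 * v2))
  with ((v1 * v1 - v2 * v2) * (v1 * v1 - v2 * v2) + 4 * (v1 * v2) * (v1 * v2)) by ring.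
rewrite V1, V2; ring.
Qed.

(* With [w^-1 = l - w], the imaginary parts give [im l |w|^2 = - im w (1 - |w|^2)]. *)
Lemma root_Cnorm_bound : 0 < im l -> Cnorm2 w < 1 -> Cnorm w * (2 + im l) <= 2.
Proof.
intros Hl Hw1.
pose proof root_Cnorm2_pos as Hw0.
assert (Him : im l * Cnorm2 w = im w * (Cnorm2 w - 1)).
{ assert (E : im (Cinv w) = im l - im w) by (rewrite root_Cinv; reflexivity).
  unfold Cinv in E; simpl in E; fold (Cnorm2 w) in E.
  replace (im l) with (im w + - im w / Cnorm2 w) by lra.
  field; lra. }
rewrite Cnorm_sqrt_Cnorm2.
set (q := sqrt (Cnorm2 w)).
assert (Hq : q * q = Cnorm2 w) by (apply sqrt_sqrt; lra).
assert (Hq0 : 0 < q) by (apply sqrt_lt_R0; lra).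
assert (Hbq : Rabs (im w) <= q) by apply Rabs_im_le_Cnorm.
assert (Hlq : im l * q <= 1 - q * q).
{ apply (Rmult_le_reg_l q); [exact Hq0|].
  assert (im l * (q * q) <= q * (1 - q * q)); [|nra].
  rewrite Hq, Him. pose proof (Rle_abs (- im w)). rewrite Rabs_Ropp in *. nra. }
nra.
Qed.

End OmegaRoot.

(* Lagrange's identity: the defect is [(a re eta + u |eta|^2)^2]. *)
Lemma Cnorm2_shift_lower (a u m : R) (eta : Cx) :
  0 <= m <= im eta -> a * a * (m * m) <= Cnorm2 (Cadd (a, 0) (Cscal u eta)) * Cnorm2 eta.
Proof.
intros Hm.
apply Rle_trans with (a * a * (im eta * im eta)).
{ apply Rmult_le_compat_l; [apply Rle_0_sqr|nra]. }
destruct eta as [xi ze]; unfold Cnorm2, Cadd, Cscal, re, im in *; simpl in *.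
pose proof (Rle_0_sqr (a * xi + u * (xi * xi + ze * ze))); unfold Rsqr in *; nra.
Qed.

Lemma Cnorm2_sub_inv_lower (x0 m M u : R) (eta w : Cx) :
  -2 < x0 < 2 -> 0 < m <= im eta -> Cnorm eta <= M ->
  let l := Cadd (x0, 0) (Cscal u eta) in
  Cmul w w = Csub (Cmul l w) (1, 0) ->
  (4 - x0 * x0) * (m * m) / (M * M) <= Cnorm2 (Csub w (Cinv w)).
Proof.
intros Hx Hm HM l Hroot.
pose proof (root_Cnorm2_sub_inv l w Hroot) as Hv.
set (v := Csub w (Cinv w)) in *.
set (C := Cnorm2 eta).
assert (HC : m * m <= C) by (unfold C, Cnorm2; nra).
assert (HCM : C <= M * M) by (apply Cnorm2_le_sqr; exact HM).
assert (Hm2 : (2 - x0) * (2 - x0) * (m * m) <= Cnorm2 (Csub l (2, 0)) * C).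
{ replace (Cnorm2 (Csub l (2, 0))) with (Cnorm2 (Cadd (x0 - 2, 0) (Cscal u eta)))
    by (unfold l, Cnorm2, Csub, Cadd, re, im; simpl; ring).
  replace ((2 - x0) * (2 - x0)) with ((x0 - 2) * (x0 - 2)) by ring.
  apply Cnorm2_shift_lower; lra. }
assert (Hp2 : (2 + x0) * (2 + x0) * (m * m) <= Cnorm2 (Cadd l (2, 0)) * C).
{ replace (Cnorm2 (Cadd l (2, 0))) with (Cnorm2 (Cadd (x0 + 2, 0) (Cscal u eta)))
    by (unfold l, Cnorm2, Cadd, re, im; simpl; ring).
  replace ((2 + x0) * (2 + x0)) with ((x0 + 2) * (x0 + 2)) by ring.
  apply Cnorm2_shift_lower; lra. }
set (D := (4 - x0 * x0) * (m * m) / (M * M)).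
assert (HM0 : 0 < M * M) by (apply Rlt_le_trans with (m * m); nra).
assert (HDM : D * (M * M) = (4 - x0 * x0) * (m * m))
  by (unfold D; field; intros ->; rewrite Rmult_0_l in HM0; lra).
assert (HD : 0 < D).
{ apply (Rmult_lt_reg_r (M * M)); [exact HM0|].
  rewrite Rmult_0_l, HDM; apply Rmult_lt_0_compat; nra. }
assert (HDC : D * C <= (4 - x0 * x0) * (m * m)) by nra.
assert (HDD : (D * C) * (D * C) <= (Cnorm2 v * C) * (Cnorm2 v * C)).
{ replace ((Cnorm2 v * C) * (Cnorm2 v * C)) with
    ((Cnorm2 (Csub l (2, 0)) * C) * (Cnorm2 (Cadd l (2, 0)) * C))
    by (transitivity ((Cnorm2 v * Cnorm2 v) * (C * C)); [rewrite Hv|]; ring).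
  apply Rle_trans with (((2 - x0) * (2 - x0) * (m * m)) * ((2 + x0) * (2 + x0) * (m * m))).
  - replace (((2 - x0) * (2 - x0) * (m * m)) * ((2 + x0) * (2 + x0) * (m * m)))
      with (((4 - x0 * x0) * (m * m)) * ((4 - x0 * x0) * (m * m))) by ring.
    assert (0 <= D * C) by (apply Rmult_le_pos; [lra|apply Cnorm2_ge0]).
    apply Rmult_le_compat; lra.
  - apply Rmult_le_compat; try assumption;
    apply Rmult_le_pos; apply Rle_0_sqr. }
assert (HC0 : 0 < C) by (apply Rlt_le_trans with (m * m); nra).
apply (Rmult_le_reg_r C _ _ HC0), Rsqr_incr_0_var; [exact HDD|].
apply Rmult_le_pos; [apply Cnorm2_ge0|lra].
Qed.

(* [2 / (2 + u m) <= 1 - d u] with [d = m / (2 + m)] as long as [u <= 1]. *)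
Lemma le_exp_of_mul_le (q m u : R) :
  0 < m -> 0 < u <= 1 -> q * (2 + u * m) <= 2 -> q <= exp (- (m / (2 + m)) * u).
Proof.
intros Hm Hu Hq.
set (d := m / (2 + m)).
assert (Hd : d * (2 + m) = m) by (unfold d; field; lra).
assert (Hlin : 2 <= (1 - d * u) * (2 + u * m)).
{ assert (0 <= d) by (unfold d; apply Rmult_le_pos; [lra|left; apply Rinv_0_lt_compat; lra]).
  assert (0 <= u * (d * m * (1 - u))) by (apply Rmult_le_pos; [lra|]; apply Rmult_le_pos; nra).
  nra. }
pose proof (exp_ineq1_le (- d * u)).
assert (q <= 1 - d * u) by (apply (Rmult_le_reg_r (2 + u * m)); nra).
lra.
Qed.

Lemma a_coef_shift_bound (x0 m M u : R) (eta : Cx) (k : Z) :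
  -2 < x0 < 2 -> 0 < m <= im eta -> Cnorm eta <= M -> 0 < u <= 1 ->
  Rabs (a_coef (Cadd (x0, 0) (Cscal u eta)) k) <=
  / sqrt ((4 - x0 * x0) * (m * m) / (M * M)) * exp (- (m / (2 + m)) * u) ^ Z.abs_nat k.
Proof.
intros Hx Hm HM Hu.
set (l := Cadd (x0, 0) (Cscal u eta)).
assert (Hl : im l = u * im eta) by (unfold l, Cadd, Cscal, im; simpl; ring).
assert (Hl0 : 0 < im l) by (rewrite Hl; apply Rmult_lt_0_compat; lra).
pose proof (omega_quadratic l) as Hroot.
pose proof (omega_Cnorm2_lt1 l Hl0) as Hw1.
unfold a_coef; fold l; set (w := omega l) in *.
set (v := Csub w (Cinv w)).
set (D := (4 - x0 * x0) * (m * m) / (M * M)).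
assert (HDv : D <= Cnorm2 v) by exact (Cnorm2_sub_inv_lower x0 m M u eta w Hx Hm HM Hroot).
assert (HD : 0 < D).
{ unfold D; apply Rdiv_lt_0_compat; [apply Rmult_lt_0_compat|]; try nra.
  pose proof (Rabs_im_le_Cnorm eta); pose proof (Rle_abs (im eta)); nra. }
assert (Hwe : Cnorm w <= exp (- (m / (2 + m)) * u)).
{ apply le_exp_of_mul_le; [lra|exact Hu|].
  pose proof (root_Cnorm_bound l w Hroot Hl0 Hw1).
  pose proof (Cnorm_ge0 w).
  assert (u * m <= im l) by (rewrite Hl; apply Rmult_le_compat_l; lra).
  nra. }
unfold Cdiv; eapply Rle_trans; [apply Rabs_im_le_Cnorm|].
rewrite Cnorm_mul, Cnorm_pow, Cnorm_inv by lra.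
rewrite Rmult_comm; apply Rmult_le_compat.
- left; apply Rinv_0_lt_compat; rewrite Cnorm_sqrt_Cnorm2; apply sqrt_lt_R0; lra.
- apply pow_le, Cnorm_ge0.
- apply Rinv_le_contravar; [apply sqrt_lt_R0; exact HD|].
  rewrite Cnorm_sqrt_Cnorm2; apply sqrt_le_1_alt; exact HDv.
- apply pow_incr; split; [apply Cnorm_ge0|exact Hwe].
Qed.

Lemma Cnorm_lt_of_components (z : Cx) (e : R) :
  Rabs (re z) < e -> Rabs (im z) < e -> Cnorm z < 2 * e.
Proof.
intros Hre Him.
pose proof (Rabs_pos (re z)); pose proof (Rabs_pos (im z)).
rewrite Cnorm_sqrt_Cnorm2, <- (sqrt_square (2 * e)) by lra.
apply sqrt_lt_1_alt; split; [apply Cnorm2_ge0|].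
unfold Cnorm2.
pose proof (Rsqr_abs (re z)); pose proof (Rsqr_abs (im z)); unfold Rsqr in *.
nra.
Qed.

(* A compact subset of the open upper half-plane stays away from the real axis:
   cover [-M, M] by the discs around [(t, 0)] missing [K] and take a Lebesgue number. *)
Lemma Ccompact_im_lower_bound (K : Cx -> Prop) :
  Ccompact K -> (forall e, K e -> 0 < im e) ->
  exists m, 0 < m /\ forall e, K e -> m <= im e.
Proof.
intros [HC [M HM]] Hpos.
assert (Hsep : forall t : R, exists eps : posreal,
          forall z, Cnorm (Csub z (t, 0)) < 2 * eps -> ~ K z).
{ intros t; destruct (HC (t, 0)) as [eps [He Hball]].
  - intros Kt; specialize (Hpos _ Kt); simpl in Hpos; lra.
  - assert (He2 : 0 < eps / 2) by lra.
    exists (mkposreal _ He2); simpl; intros z Hz; apply Hball; lra. }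
pose (delta t := proj1_sig (constructive_indefinite_description _ (Hsep t))).
assert (Hdelta : forall t z, Cnorm (Csub z (t, 0)) < 2 * delta t -> ~ K z)
  by (intros t; exact (proj2_sig (constructive_indefinite_description _ (Hsep t)))).
destruct (Compactness.compactness_value_1d (- M) M delta) as [d Hd].
exists d; split; [apply cond_pos|].
intros z Kz; apply Rnot_lt_le; intros Hzd.
assert (Hre : - M <= re z <= M).
{ pose proof (Rabs_re_le_Cnorm z); pose proof (HM z Kz).
  pose proof (Rle_abs (re z)); pose proof (Rle_abs (- re z)).
  rewrite Rabs_Ropp in *; lra. }
apply (Hd (re z) Hre); intros [t [_ [Ht Hdt]]].
apply (Hdelta t z); [|exact Kz].
apply Cnorm_lt_of_components; simpl; [exact Ht|].
pose proof (Hpos z Kz); rewrite Rabs_right; lra.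
Qed.

Lemma Rabs_sumN_mul_le (N : nat) (c f : nat -> R) (B : R) :
  (forall j, (j < N)%nat -> Rabs (f j) <= B) ->
  Rabs (sumN N (fun j => c j * f j)) <= sumN N (fun j => Rabs (c j)) * B.
Proof.
induction N as [|N IHN]; intros Hf; simpl.
- rewrite Rabs_R0; lra.
- eapply Rle_trans; [apply Rabs_triang|].
  rewrite Rmult_plus_distr_r, Rabs_mult.
  apply Rplus_le_compat; [apply IHN; intros; apply Hf; lia|].
  apply Rmult_le_compat_l; [apply Rabs_pos|apply Hf; lia].
Qed.

Lemma exp_pow (x : R) (k : nat) : exp x ^ k = exp (INR k * x).
Proof.
induction k as [|k IHk]; cbn [pow].
- rewrite Rmult_0_l, exp_0; reflexivity.
- rewrite IHk, <- exp_plus, S_INR; f_equal; ring.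
Qed.

Lemma Rpower_ge1 (n : nat) (alpha : R) : (1 <= n)%nat -> 0 <= alpha -> 1 <= Rpower (INR n) alpha.
Proof.
intros Hn Ha.
assert (1 <= INR n) by (apply (le_INR 1); exact Hn).
rewrite <- (Rpower_O (INR n)) by lra.
apply Rle_Rpower; assumption.
Qed.

Theorem lemma4p1 (x0 alpha : R) (K : Cx -> Prop) :
  -2 < x0 < 2 -> 0 < alpha < 1 -> Ccompact K ->
  (forall e, K e -> 0 < im e) ->
  exists d1 d2 : R, 0 < d1 /\ 0 < d2 /\
    forall (n N : nat) (c : nat -> R) (eta : nat -> Cx),
      (1 <= n)%nat ->
      (forall j, (j < N)%nat -> K (eta j)) ->
      forall k : Z,
        Rabs (phi_coef x0 alpha n N c eta k) <=
        d1 / Rpower (INR n) alpha * sumN N (fun j => Rabs (c j)) *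
        exp (- d2 * IZR (Z.abs k) / Rpower (INR n) alpha).
Proof.
intros Hx Ha HK Hpos.
destruct (Ccompact_im_lower_bound K HK Hpos) as [m [Hm Hmin]].
destruct HK as [_ [M0 HM0]].
set (M := Rabs M0 + 1).
assert (HM : 0 < M) by (pose proof (Rabs_pos M0); unfold M; lra).
set (D := (4 - x0 * x0) * (m * m) / (M * M)).
exists (/ sqrt D), (m / (2 + m)); split; [|split; [apply Rdiv_lt_0_compat; lra|]].
{ apply Rinv_0_lt_compat, sqrt_lt_R0; unfold D.
  apply Rdiv_lt_0_compat; apply Rmult_lt_0_compat; nra. }
intros n N c eta Hn Heta k.
set (P := Rpower (INR n) alpha).
assert (HP : 1 <= P) by (apply Rpower_ge1; [exact Hn|lra]).
assert (Hu : 0 < / P <= 1).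
{ split; [apply Rinv_0_lt_compat; lra|].
  rewrite <- Rinv_1; apply Rinv_le_contravar; lra. }
replace (exp (- (m / (2 + m)) * IZR (Z.abs k) / P))
  with (exp (- (m / (2 + m)) * / P) ^ Z.abs_nat k)
  by (rewrite exp_pow, INR_IZR_INZ, Nat2Z.inj_abs_nat; f_equal; unfold Rdiv; ring).
unfold phi_coef; fold P.
rewrite Rabs_mult, Rabs_right by (apply Rle_ge, Rlt_le, Rinv_0_lt_compat; lra).
set (E := exp (- (m / (2 + m)) * / P) ^ Z.abs_nat k).
replace (/ sqrt D / P * sumN N (fun j => Rabs (c j)) * E)
  with (/ P * (sumN N (fun j => Rabs (c j)) * (/ sqrt D * E))) by (unfold Rdiv; ring).
apply Rmult_le_compat_l; [apply Rlt_le, Rinv_0_lt_compat; lra|].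
apply Rabs_sumN_mul_le; intros j Hj.
apply a_coef_shift_bound; [exact Hx| | |exact Hu].
- split; [exact Hm|exact (Hmin _ (Heta j Hj))].
- pose proof (HM0 _ (Heta j Hj)); pose proof (Rle_abs M0); unfold M; lra.
Qed.
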